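(* Let $n\ge1$, $s\in\{1,\dots,n\}$, let $C\in\mathbb{R}^{n\times n}$ be symmetric positive definite and $z^*=\max\{\log\det(C_{S,S}) : S\subseteq\{1,\dots,n\},\ |S|=s\}$. For every $t$ with $0<t\le\lambda_{\min}(C)$, $$z^*=\max\Big\{\log\det\big(M_t(x)+tI\big) : x\in\{0,1\}^n,\ \textstyle\sum_{i=1}^n x_i=s\Big\}-(n-s)\log(t).$$
   Context: $\log$ is natural, $C_{S,S}$ is the principal submatrix indexed by $S$, $\lambda_{\min}(C)$ is the smallest eigenvalue of $C$. For $0\le t\le\lambda_{\min}(C)$ let $A(t)\in\mathbb{R}^{n\times n}$ be a Cholesky factor of $C-tI$ (so $C-tI=A(t)^\top A(t)$), with $i$-th column $a_i(t)$, and $M_t(x)=\sum_i x_i a_i(t)a_i(t)^\top$. *)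

From HB Require Import structures.
From mathcomp Require Import all_boot all_order all_algebra.
From mathcomp Require Import all_classical all_reals all_analysis.
Set Implicit Arguments. Unset Strict Implicit. Unset Printing Implicit Defensive.
Import Order.TTheory GRing.Theory Num.Theory.
Local Open Scope ring_scope.

Definition posdef (R : realType) (n : nat) (C : 'M[R]_n) : Prop :=
  C^T = C /\ forall v : 'cV[R]_n, v != 0 -> 0 < (v^T *m C *m v) 0 0.

Definition principal_submx (R : realType) (n : nat) (C : 'M[R]_n)
  (S : {set 'I_n}) : 'M[R]_#|S| :=
  \matrix_(i, j) C (enum_val i) (enum_val j).

(* smallest eigenvalue: infimum of the (finite, nonempty for symmetric C)
   set of real eigenvalues *)
Definition lambda_min (R : realType) (n : nat) (C : 'M[R]_n) : R :=
  inf [set a : R | eigenvalue C a].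

Definition cholesky_factor (R : realType) (n : nat) (A B : 'M[R]_n) : Prop :=
  [/\ forall i j : 'I_n, (j < i)%N -> A i j = 0,
      forall i : 'I_n, 0 <= A i i
    & B = A^T *m A].

Definition Mx (R : realType) (n : nat) (A : 'M[R]_n) (x : {ffun 'I_n -> bool})
  : 'M[R]_n :=
  \sum_(i < n) (x i)%:R *: (col i A *m (col i A)^T).

Definition zstar (R : realType) (n s : nat) (C : 'M[R]_n) : \bar R :=
  \big[Order.max/-oo%E]_(S : {set 'I_n} | #|S| == s)
     (ln (\det (principal_submx C S)))%:E.

Definition xmax (R : realType) (n s : nat) (A : 'M[R]_n) (t : R) : \bar R :=
  \big[Order.max/-oo%E]_(x : {ffun 'I_n -> bool} | (\sum_i (x i : nat))%N == s)
     (ln (\det (Mx A x + t%:M)))%:E.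

(* With S the support of x and P the 0/1 matrix selecting the rows in S,
   M_t(x) = (A P^T) (P A^T).  Sylvester's identity
   det (X Y + t I_n) = t^(n-s) det (Y X + t I_s) then gives
   det (M_t(x) + t I) = t^(n-s) det (P (A^T A + t I) P^T) = t^(n-s) det C_{S,S},
   and det C_{S,S} > 0 because C_{S,S} is positive definite, so the logarithms
   are finite and the two maxima differ by the constant (n-s) log t. *)

From HB Require Import structures.
From mathcomp Require Import all_boot all_order all_algebra.
From mathcomp Require Import all_classical all_reals all_analysis.
From mathcomp Require Import ring lra.
Import Order.TTheory GRing.Theory Num.Theory.
Set Implicit Arguments. Unset Strict Implicit. Unset Printing Implicit Defensive.
Local Open Scope ring_scope.

Lemma det_sylvester (R : fieldType) (n m : nat) (X : 'M[R]_(n, m)) (Y : 'M[R]_(m, n))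
    (t : R) :
  t != 0 -> (m <= n)%N ->
  \det (X *m Y + t%:M) = t ^+ (n - m) * \det (Y *m X + t%:M).
Proof.
move=> t_neq0 le_mn.
pose K : 'M[R]_m := 1%:M + t^-1 *: (Y *m X).
pose B : 'M[R]_(n + m) := block_mx t%:M X (- Y) 1%:M.
have detB_XY : \det B = \det (X *m Y + t%:M).
  have -> : B = block_mx 1%:M X 0 1%:M *m block_mx (X *m Y + t%:M) 0 (- Y) 1%:M.
    rewrite mulmx_block !(mul1mx, mul0mx, mulmx0, mulmx1, add0r, addr0).
    by rewrite mulmxN addrC addKr.
  by rewrite det_mulmx det_ublock det_lblock !det1 !mul1r mulr1.
have detB_K : \det B = t ^+ n * \det K.
  have -> : B = block_mx t%:M 0 (- Y) K *m block_mx 1%:M (t^-1 *: X) 0 1%:M.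
    rewrite mulmx_block !(mul1mx, mul0mx, mulmx0, mulmx1, add0r, addr0).
    rewrite mul_scalar_mx scalerA divff // scale1r mulNmx /K.
    by rewrite -scalemxAr addrC -addrA subrr addr0.
  by rewrite det_mulmx det_ublock det_lblock ?det1 ?mulr1 ?det_scalar.
have detYX_K : \det (Y *m X + t%:M) = t ^+ m * \det K.
  by rewrite -detZ /K scalerDr scalerA mulfV // scale1r addrC scalemx1.
by rewrite detYX_K mulrA -exprD subnK // -detB_K detB_XY.
Qed.

Lemma big_ffun_bool_card (V : Type) (idx : V) (op : SemiGroup.com_law V)
    (T : finType) (k : nat) (F : {ffun T -> bool} -> V) :
  \big[op/idx]_(x : {ffun T -> bool} | (\sum_i (x i : nat))%N == k) F x
  = \big[op/idx]_(S : {set T} | #|S| == k) F [ffun i => i \in S].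
Proof.
have sum_card (x : {ffun T -> bool}) : (\sum_i (x i : nat))%N = #|[set i | x i]|.
  by rewrite -sum1dep_card [RHS]big_mkcond; apply: eq_bigr => i _; case: (x i).
have setK (S : {set T}) : [set i | [ffun j => j \in S] i] = S.
  by apply/setP => i; rewrite inE ffunE.
rewrite (reindex (fun S : {set T} => [ffun i => i \in S])) /=.
  by apply: eq_bigl => S; rewrite sum_card setK.
exists (fun x : {ffun T -> bool} => [set i | x i]) => [S _ | x _]; first exact: setK.
by apply/ffunP => i; rewrite ffunE inE.
Qed.

Lemma bigmaxe_addr (R : realDomainType) (I : finType) (P : pred I)
    (F : I -> \bar R) (c : R) :
  (\big[Order.max/-oo]_(i | P i) (F i + c%:E)
   = \big[Order.max/-oo]_(i | P i) F i + c%:E)%E.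
Proof.
by apply/esym/(big_morph (fun y => y + c%:E)%E) => [y z|]; rewrite ?adde_maxl.
Qed.

Section PositiveForm.
Variables (R : rcfType) (m : nat).

Definition posform (M : 'M[R]_m) :=
  forall v : 'cV[R]_m, v != 0 -> 0 < (v^T *m M *m v) 0 0.

Lemma posform_det_neq0 (M : 'M[R]_m) : posform M -> \det M != 0.
Proof.
move=> posM; apply/det0P => -[v v_neq0 vM0].
have := posM v^T; rewrite trmx_eq0 trmxK => /(_ v_neq0).
by rewrite vM0 mul0mx mxE ltxx.
Qed.

Lemma posform_convex1 (M : 'M[R]_m) (u : R) : posform M -> 0 < u <= 1 ->
  posform ((1 - u)%:M + u *: M).
Proof.
move=> posM /andP[u_gt0 u_le1] v v_neq0.
have vv_ge0 : 0 <= (v^T *m v) 0 0.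
  by rewrite mxE; apply: sumr_ge0 => j _; rewrite mxE -expr2 sqr_ge0.
move: vv_ge0 (posM v v_neq0).
rewrite mulmxDr mulmxDl mul_mx_scalar -scalemxAr -!scalemxAl !mxE.
nra.
Qed.

(* [\det ((1 - u)%:M + u *: M)] is a polynomial in [u] that is 1 at 0 and
   never vanishes on (0, 1], so by the intermediate value theorem it is
   positive at 1. *)
Lemma posform_det_gt0 (M : 'M[R]_m) : posform M -> 0 < \det M.
Proof.
move=> posM.
pose Q : 'M[{poly R}]_m := \matrix_(i, j) ((i == j)%:R *: (1 - 'X) + M i j *: 'X).
have detQE u : (\det Q).[u] = \det ((1 - u)%:M + u *: M).
  rewrite -horner_evalE -det_map_mx; congr (\det _); apply/matrixP => i j.
  rewrite !mxE /= horner_evalE !hornerE.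
  by case: eqP => _ /=; ring.
have detQ0 : (\det Q).[0] = 1 by rewrite detQE subr0 scale0r addr0 det1.
have detQ1 : (\det Q).[1] = \det M by rewrite detQE subrr scale1r raddf0 add0r.
rewrite ltNge; apply/negP => detM_le0.
have sign_change : (- \det Q).[0] <= 0 <= (- \det Q).[1].
  by rewrite !hornerN detQ0 detQ1 lerN10 oppr_ge0.
have [u /andP[u_ge0 u_le1] /rootP] := poly_ivt ler01 sign_change.
rewrite hornerN => /eqP; rewrite oppr_eq0 => /eqP detQu0.
have [u0|u_neq0] := eqVneq u 0.
  by move: detQu0; rewrite u0 detQ0 => /eqP; rewrite oner_eq0.
have : 0 < u <= 1 by rewrite u_le1 andbT lt_neqAle eq_sym u_neq0 u_ge0.
move=> /(posform_convex1 posM) /posform_det_neq0.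
by rewrite -detQE detQu0 eqxx.
Qed.

End PositiveForm.

Section SelectionMatrix.
Variables (R : pzRingType) (n : nat) (S : {set 'I_n}).

Definition selmx : 'M[R]_(#|S|, n) := \matrix_(k, j) (enum_val k == j)%:R.

Lemma selmx_mul p (M : 'M[R]_(n, p)) :
  selmx *m M = \matrix_(k, j) M (enum_val k) j.
Proof.
apply/matrixP => k j; rewrite !mxE (bigD1 (enum_val k)) //= big1 => [|l].
  by rewrite mxE eqxx mul1r addr0.
by rewrite mxE eq_sym => /negPf->; rewrite mul0r.
Qed.

Lemma mul_trselmx p (M : 'M[R]_(p, n)) :
  M *m selmx^T = \matrix_(i, k) M i (enum_val k).
Proof.
apply/matrixP => i k; rewrite !mxE (bigD1 (enum_val k)) //= big1 => [|l].
  by rewrite !mxE eqxx mulr1 addr0.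
by rewrite !mxE eq_sym => /negPf->; rewrite mulr0.
Qed.

Lemma selmx_mul_tr : selmx *m selmx^T = 1%:M.
Proof.
apply/matrixP => k l.
by rewrite selmx_mul !mxE eq_sym (inj_eq enum_val_inj).
Qed.

Lemma mul_trselmx_selmx_mul p q (X : 'M[R]_(p, n)) (Y : 'M[R]_(n, q)) :
  X *m selmx^T *m (selmx *m Y) = \matrix_(i, j) \sum_(k in S) X i k * Y k j.
Proof.
apply/matrixP => i j; rewrite mul_trselmx selmx_mul !mxE.
rewrite (big_enum_val (fun k => X i k * Y k j)).
by apply: eq_bigr => k _; rewrite !mxE.
Qed.

End SelectionMatrix.

Arguments selmx {R n} S.

Section PrincipalMinors.
Variable R : realType.

Lemma principal_submxE n (C : 'M[R]_n) (S : {set 'I_n}) :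
  principal_submx C S = selmx S *m C *m (selmx S)^T.
Proof. by apply/matrixP => k l; rewrite mul_trselmx selmx_mul !mxE. Qed.

Lemma posdef_principal_submx_det_gt0 n (C : 'M[R]_n) (S : {set 'I_n}) :
  posdef C -> 0 < \det (principal_submx C S).
Proof.
move=> [_ posC]; apply: posform_det_gt0 => w w_neq0.
have -> : w^T *m principal_submx C S *m w
    = ((selmx S)^T *m w)^T *m C *m ((selmx S)^T *m w).
  by rewrite principal_submxE trmx_mul trmxK !mulmxA.
apply: posC; apply: contraNneq w_neq0 => selw0.
by rewrite -[w]mul1mx -(selmx_mul_tr R S) -mulmxA selw0 mulmx0.
Qed.

Lemma Mx_selmx n (A : 'M[R]_n) (S : {set 'I_n}) :
  Mx A [ffun i => i \in S] = A *m (selmx S)^T *m (selmx S *m A^T).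
Proof.
apply/matrixP => j l.
rewrite mul_trselmx_selmx_mul /Mx summxE !mxE [RHS]big_mkcond.
apply: eq_bigr => i _; rewrite ffunE !mxE big_ord1 !mxE.
by case: (i \in S); rewrite ?mul1r ?mul0r.
Qed.

Lemma det_Mx_add_scalar n (C A : 'M[R]_n) (S : {set 'I_n}) (t : R) :
  t != 0 -> C - t%:M = A^T *m A ->
  \det (Mx A [ffun i => i \in S] + t%:M)
  = t ^+ (n - #|S|) * \det (principal_submx C S).
Proof.
move=> t_neq0 CtA.
have card_le : (#|S| <= n)%N by rewrite -[X in (_ <= X)%N]card_ord max_card.
rewrite Mx_selmx det_sylvester //; congr (_ * \det _).
have -> : C = A^T *m A + t%:M by rewrite -CtA subrK.
rewrite principal_submxE mulmxDr mulmxDl mul_mx_scalar -scalemxAl selmx_mul_tr.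
by rewrite scalemx1 !mulmxA.
Qed.

Lemma ln_det_Mx_add_scalar n (C A : 'M[R]_n) (S : {set 'I_n}) (t : R) :
  posdef C -> 0 < t -> C - t%:M = A^T *m A ->
  ln (\det (Mx A [ffun i => i \in S] + t%:M))
  = ln (\det (principal_submx C S)) + (n - #|S|)%:R * ln t.
Proof.
move=> posC t_gt0 CtA; rewrite (det_Mx_add_scalar S (lt0r_neq0 t_gt0) CtA).
rewrite lnM ?posrE ?exprn_gt0 ?posdef_principal_submx_det_gt0 //.
by rewrite lnXn // mulr_natl addrC.
Qed.

End PrincipalMinors.

Theorem corollary3 (R : realType) (n s : nat) (C : 'M[R]_n) :
  (1 <= n)%N -> (1 <= s <= n)%N -> posdef C ->
  forall t : R, 0 < t -> t <= lambda_min C ->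
  forall A : 'M[R]_n, cholesky_factor A (C - t%:M) ->
  zstar s C = (xmax s A t - ((n - s)%:R * ln t)%:E)%E.
Proof.
(* [t <= lambda_min C] only ensures that a Cholesky factor exists; the proof
   uses nothing but [0 < t] and [C - t%:M = A^T *m A]. *)
move=> _ _ posC t t_gt0 _ A [_ _ CtA].
rewrite /xmax big_ffun_bool_card.
under eq_bigr => S /eqP cardS do
  rewrite (ln_det_Mx_add_scalar S posC t_gt0 CtA) [X in (n - X)%:R]cardS EFinD.
by rewrite bigmaxe_addr addeK.
Qed.
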